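(* Let $p$ be a prime. If $\{a^1,\ldots,a^n\}\subseteq \mathbb{Z}^m$ is a $p$-adic generating set for a cone, then it is a $p$-adic generating set for a subspace.
   Context: A $p$-adic rational is a number $a/p^k$ with $a,k\in\mathbb{Z}$, $k\ge0$. A finite set $S\subseteq\mathbb{Z}^m$ is a $p$-adic generating set for a cone if every integral vector in the conic hull of $S$ is a conic combination of the elements of $S$ with $p$-adic coefficients; it is a $p$-adic generating set for a subspace if every integral vector in the linear hull of $S$ is a linear combination of the elements of $S$ with $p$-adic coefficients. *)

From HB Require Import structures.
From mathcomp Require Import all_boot all_order all_algebra.
From mathcomp Require Import reals.
Set Implicit Arguments. Unset Strict Implicit. Unset Printing Implicit Defensive.
Import Order.TTheory GRing.Theory Num.Theory.
Local Open Scope ring_scope.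

Definition p_adic (p : nat) (q : rat) : Prop :=
  exists (a : int) (k : nat), q = a%:~R / (p%:R ^+ k).

Definition in_cone (R : realType) (m n : nat) (a : 'I_n -> 'rV[int]_m)
    (x : 'rV[int]_m) : Prop :=
  exists lam : 'I_n -> R, (forall i, 0 <= lam i) /\
    map_mx intr x = \sum_(i < n) lam i *: map_mx intr (a i).

Definition in_span (R : realType) (m n : nat) (a : 'I_n -> 'rV[int]_m)
    (x : 'rV[int]_m) : Prop :=
  exists lam : 'I_n -> R,
    map_mx intr x = \sum_(i < n) lam i *: map_mx intr (a i).

Definition padic_gen_cone (R : realType) (p m n : nat)
    (a : 'I_n -> 'rV[int]_m) : Prop :=
  forall x : 'rV[int]_m, in_cone R a x ->
    exists lam : 'I_n -> rat, (forall i, 0 <= lam i /\ p_adic p (lam i)) /\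
      map_mx intr x = \sum_(i < n) lam i *: map_mx intr (a i).

Definition padic_gen_subspace (R : realType) (p m n : nat)
    (a : 'I_n -> 'rV[int]_m) : Prop :=
  forall x : 'rV[int]_m, in_span R a x ->
    exists lam : 'I_n -> rat, (forall i, p_adic p (lam i)) /\
      map_mx intr x = \sum_(i < n) lam i *: map_mx intr (a i).

From HB Require Import structures.
From mathcomp Require Import all_boot all_order all_algebra.
From mathcomp Require Import reals.
From mathcomp Require Import ring.
Set Implicit Arguments. Unset Strict Implicit. Unset Printing Implicit Defensive.
Import Order.TTheory GRing.Theory Num.Theory.
Local Open Scope ring_scope.

(* Shifting every coefficient of a real representation of x by a large natural
   number N makes them nonnegative, so x + N (a^1 + ... + a^n) lies in the
   cone.  A p-adic conic representation of that vector, with every coefficient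
   shifted back by N, is a p-adic linear representation of x, because the
   p-adic rationals form a ring containing the integers. *)

Lemma p_adic_int (p : nat) (b : int) : p_adic p b%:~R.
Proof. by exists b, 0%N; rewrite expr0 divr1. Qed.

Lemma p_adicB (p : nat) (q r : rat) :
  (0 < p)%N -> p_adic p q -> p_adic p r -> p_adic p (q - r).
Proof.
move=> p_gt0 [b [k ->]] [c [l ->]].
exists (b * (p ^ l)%N%:Z - c * (p ^ k)%N%:Z), (k + l).
have p_neq0 : (p%:R : rat) != 0 by rewrite pnatr_eq0 -lt0n.
rewrite rmorphB !rmorphM /= -!pmulrn !natrX exprD.
by field; rewrite !expf_neq0.
Qed.

Lemma nat_shift_ge0 (F : archiRealFieldType) (n : nat) (lam : 'I_n -> F) :
  exists N : nat, forall i, 0 <= lam i + N%:R.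
Proof.
have sum_ge0 : 0 <= \sum_i `|lam i| by apply: sumr_ge0 => i _.
exists (Num.bound (\sum_i `|lam i|)) => i.
rewrite -(opprK (lam i)) addrC subr_ge0.
apply: le_trans (ltW (archi_boundP sum_ge0)).
apply: le_trans (ler_norm _) _; rewrite normrN.
by rewrite (bigD1 i) //= lerDl; apply: sumr_ge0.
Qed.

Lemma map_mx_intr_sumMn (F : numFieldType) (m n N : nat)
    (a : 'I_n -> 'rV[int]_m) :
  map_mx (intr : int -> F) (\sum_i a i *+ N) =
  \sum_i N%:R *: map_mx intr (a i).
Proof.
apply/rowP => j; rewrite !mxE summxE rmorph_sum summxE.
by apply: eq_bigr => i _; rewrite !mxE mulmxnE rmorphMn mulr_natl.
Qed.

Lemma in_cone_shift (R : realType) (m n N : nat) (a : 'I_n -> 'rV[int]_m)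
    (x : 'rV[int]_m) (lam : 'I_n -> R) :
  (forall i, 0 <= lam i + N%:R) ->
  map_mx intr x = \sum_i lam i *: map_mx intr (a i) ->
  in_cone R a (x + \sum_i a i *+ N).
Proof.
move=> shift_ge0 x_lam; exists (fun i => lam i + N%:R); split=> //.
rewrite raddfD /= map_mx_intr_sumMn x_lam -big_split /=.
by apply: eq_bigr => i _; rewrite scalerDl.
Qed.

Theorem proposition3p3 (R : realType) (p m n : nat) (a : 'I_n -> 'rV[int]_m) :
  prime p -> padic_gen_cone R p a -> padic_gen_subspace R p a.
Proof.
move=> p_prime cone_gen x [lam x_lam].
have [N shift_ge0] := nat_shift_ge0 lam.
have [mu [mu_padic x_mu]] := cone_gen _ (in_cone_shift shift_ge0 x_lam).
exists (fun i => mu i - N%:R); split.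
  move=> i; apply: p_adicB; first exact: prime_gt0.
    exact: (mu_padic i).2.
  exact: p_adic_int p N.
move: x_mu; rewrite raddfD /= map_mx_intr_sumMn => /(canRL (addrK _)) ->.
by rewrite -sumrB; apply: eq_bigr => i _; rewrite scalerBl.
Qed.
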